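(* For all $q\in Q$, $p''(q)$ and $r''(\overline p(q))$ have the same sign.
   Context: Let $0<q_\ell<q_h<\infty$, $Q=[q_\ell,q_h]$, and let $c$ be a real number with $0<c<q_\ell$. Let $F$ be a probability distribution on $[0,1]$ with support $[0,1]$ admitting a twice continuously differentiable density $f:(0,1)\to\mathbb{R}_{>0}$. Define $r(v)=(1-F(v))/f(v)$ and $\psi(v)=v-r(v)$ on $(0,1)$, and assume $\psi'(v)>0$ whenever $\psi(v)>0$. For $q\in Q$, $p(q)$ is the unique maximizer over $p\in\mathbb{R}$ of $(p-c)\big(1-F(p/q)\big)$, and $\overline p(q)=p(q)/q$. *)

From Stdlib Require Import Reals.
From Coquelicot Require Import Coquelicot.
Open Scope R_scope.

Definition deriv_on_interval (a b : R) (g g' : R -> R) : Prop :=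
  forall x, a <= x <= b ->
    filterlim (fun y => (g y - g x) / (y - x))
      (within (fun y => a <= y <= b /\ y <> x) (locally x))
      (locally (g' x)).

Definition same_sign (a b : R) : Prop :=
  (0 < a <-> 0 < b) /\ (a = 0 <-> b = 0) /\ (a < 0 <-> b < 0).

Definition is_cdf_with_density (F f : R -> R) : Prop :=
  (forall x, x <= 0 -> F x = 0) /\
  (forall x, 1 <= x -> F x = 1) /\
  (forall x, continuous F x) /\
  (forall a b, 0 < a -> a <= b -> b < 1 -> is_RInt f a b (F b - F a)).

Definition C2_on_01 (f : R -> R) : Prop :=
  forall x, 0 < x < 1 ->
    ex_derive f x /\ ex_derive (Derive f) x /\ continuous (Derive_n f 2) x.

Definition r_of (F f : R -> R) (v : R) : R := (1 - F v) / f v.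
Definition psi_of (F f : R -> R) (v : R) : R := v - r_of F f v.

Definition profit (F : R -> R) (c q x : R) : R := (x - c) * (1 - F (x / q)).

(* The maximiser p(q) lies in (0, q) and satisfies the first-order condition
   psi(p(q)/q) = c/q.  Since psi' > 0 wherever psi > 0, psi is injective on
   {psi > 0} and has a differentiable local inverse there, so
   pbar(q) = p(q)/q = psi^-1(c/q) and p = q pbar are twice differentiable.
   Differentiating psi(pbar) = c/q gives q pbar' = -c/(q psi'(pbar)), hence
   p' = pbar - c/(q psi'(pbar)), and differentiating once more, using
   psi'' = -r'', p'' = c^2 r''(pbar) / (q^3 psi'(pbar)^3) with psi'(pbar) > 0. *)

From Stdlib Require Import Reals Lra ClassicalEpsilon.
From Coquelicot Require Import Coquelicot.
Open Scope R_scope.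

Lemma ball_R (x e y : R) : ball x e y <-> Rabs (y - x) < e.
Proof. reflexivity. Qed.

Lemma is_derive_diff_quot (g : R -> R) (x l : R) :
  is_derive g x l <-> is_lim (fun y => (g y - g x) / (y - x)) x l.
Proof.
  rewrite is_derive_Reals. split.
  - intros Hd. apply filterlim_locally. intros eps.
    destruct (Hd eps (cond_pos eps)) as [d Hdd].
    exists d. intros y Hy Hyx. specialize (Hdd (y - x)).
    rewrite Rplus_minus in Hdd. apply Hdd; [lra | exact Hy].
  - intros Hq eps Heps.
    destruct (proj1 (filterlim_locally _ _) Hq (mkposreal eps Heps)) as [d Hdd].
    exists d. intros h Hh0 Hh. specialize (Hdd (x + h)).
    replace (x + h - x) with h in Hdd by ring.
    apply Hdd; [apply ball_R; replace (x + h - x) with h by ring; exact Hh | lra].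
Qed.

Lemma is_derive_pos_crossing (g : R -> R) (x l eps : R) :
  is_derive g x l -> 0 < l -> 0 < eps ->
  exists a b, x - eps < a < x /\ x < b < x + eps /\ g a < g x < g b.
Proof.
  intros Hd Hl Heps. apply is_derive_diff_quot in Hd.
  destruct (Hd (fun q => 0 < q)) as [d Hq].
  { apply (locally_interval _ l 0 p_infty); simpl; auto. }
  assert (Hh : exists h, 0 < h < d /\ h < eps).
  { exists (Rmin (d / 2) (eps / 2)). pose proof (cond_pos d).
    pose proof (Rmin_l (d / 2) (eps / 2)). pose proof (Rmin_r (d / 2) (eps / 2)).
    assert (0 < Rmin (d / 2) (eps / 2)) by (apply Rmin_glb_lt; lra). lra. }
  destruct Hh as [h Hh].
  assert (Hsign : forall y, y = x - h \/ y = x + h -> 0 < (g y - g x) * (y - x)).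
  { intros y Hy.
    assert (Hyx : y - x <> 0) by (destruct Hy; lra).
    assert (Hpos : 0 < (g y - g x) / (y - x)).
    { apply Hq; [apply ball_R | lra].
      destruct Hy as [-> | ->]; [rewrite Rabs_left | rewrite Rabs_right]; lra. }
    replace ((g y - g x) * (y - x)) with ((g y - g x) / (y - x) * ((y - x) * (y - x)))
      by (field; exact Hyx).
    apply Rmult_lt_0_compat; nra. }
  exists (x - h), (x + h).
  pose proof (Hsign (x - h) (or_introl eq_refl)).
  pose proof (Hsign (x + h) (or_intror eq_refl)).
  repeat split; nra.
Qed.

Lemma is_derive_local_max (g : R -> R) (a b x l : R) :
  is_derive g x l -> a < x < b -> (forall y, a < y < b -> g y <= g x) -> l = 0.
Proof.
  intros Hd Hx Hmax. apply is_derive_Reals in Hd.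
  rewrite <- (derive_pt_eq_0 g x l (exist _ l Hd) Hd).
  apply (deriv_maximum g a b x); try lra. intros y Hay Hyb. apply Hmax. lra.
Qed.

Lemma is_derive_inverse (h g : R -> R) (y0 l : R) :
  continuous g y0 -> locally y0 (fun y => h (g y) = y) ->
  is_derive h (g y0) l -> l <> 0 -> is_derive g y0 (/ l).
Proof.
  intros Hg [d Hinv] Hh Hl.
  apply is_derive_diff_quot in Hh. apply is_derive_diff_quot.
  pose proof (Hinv y0 (ball_center y0 d)) as Hinv0.
  assert (Hne : Rbar_locally' y0 (fun y => h (g y) = y /\ g y <> g y0)).
  { exists d. intros y Hy Hyy. split; [exact (Hinv y Hy) |].
    intros E. apply Hyy. rewrite <- (Hinv y Hy), E. exact Hinv0. }
  assert (Hquot := is_lim_comp _ g y0 _ _ Hh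
    (is_lim_continuity g y0 (proj2 (continuity_pt_filterlim g y0) Hg))
    ltac:(revert Hne; apply filter_imp; intros y [_ Hy] E; injection E; exact Hy)).
  assert (Hinvq := is_lim_inv _ _ _ Hquot ltac:(intro E; injection E; exact Hl)).
  revert Hinvq. apply is_lim_ext_loc.
  revert Hne. apply filter_imp. intros y [Hhy Hy].
  assert (y <> y0) by (intros ->; exact (Hy eq_refl)).
  rewrite Hhy, Hinv0. field. split; lra.
Qed.

Lemma deriv_on_interval_of_is_derive (a b : R) (g h g' : R -> R) :
  (forall x, a <= x <= b -> is_derive g x (g' x)) ->
  (forall x, a <= x <= b -> h x = g x) -> deriv_on_interval a b h g'.
Proof.
  intros Hd Heq x Hx P HP.
  destruct (proj1 (is_derive_diff_quot g x (g' x)) (Hd x Hx) P HP) as [d Hdd].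
  exists d. intros y Hy [Hyab Hyx].
  rewrite (Heq y Hyab), (Heq x Hx). exact (Hdd y Hy Hyx).
Qed.

Lemma same_sign_pos_mult (k b : R) : 0 < k -> same_sign (k * b) b.
Proof. intros Hk. unfold same_sign. repeat split; intros; nra. Qed.

Section Distribution.

Variables F f : R -> R.
Hypothesis HF : is_cdf_with_density F f.
Hypothesis Hfpos : forall v, 0 < v < 1 -> 0 < f v.
Hypothesis Hf2 : C2_on_01 f.

Local Notation r := (r_of F f).
Local Notation psi := (psi_of F f).

Lemma is_derive_cdf v : 0 < v < 1 -> is_derive F v (f v).
Proof.
  intros Hv. destruct HF as [_ [_ [_ HI]]].
  assert (H : is_derive (fun y => F y - F (v / 2)) v (f v)).
  { apply (is_derive_RInt f _ (v / 2)).
    - apply (locally_interval _ v (v / 2) 1); simpl; try lra.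
      intros y Hy1 Hy2. apply HI; lra.
    - apply ex_derive_continuous, (Hf2 v Hv). }
  pose proof (is_derive_plus _ _ v _ _ H (is_derive_const (F (v / 2)) v)) as Hsum.
  rewrite plus_zero_r in Hsum. revert Hsum. apply is_derive_ext.
  intros y. unfold plus; simpl. ring.
Qed.

Definition dr (v : R) : R := -1 - (1 - F v) * Derive f v / f v ^ 2.
Definition dpsi (v : R) : R := 1 - dr v.

Lemma is_derive_r v : 0 < v < 1 -> is_derive r v (dr v).
Proof.
  intros Hv. pose proof (Hfpos v Hv). pose proof (is_derive_cdf v Hv) as HFd.
  unfold r_of. auto_derive.
  - repeat split; [exists (f v); exact HFd | apply (Hf2 v Hv) | lra].
  - change (fun x => F x) with F. change (fun x => f x) with f.
    rewrite (is_derive_unique F v (f v) HFd). unfold dr. field. lra.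
Qed.

Lemma ex_derive_dr v : 0 < v < 1 -> ex_derive dr v.
Proof.
  intros Hv. pose proof (Hfpos v Hv). destruct (Hf2 v Hv) as [Hf1 [Hf1' _]].
  unfold dr. auto_derive.
  repeat split; auto; [exists (f v); exact (is_derive_cdf v Hv) | nra].
Qed.

Lemma Derive_n_r_2 v : 0 < v < 1 -> Derive_n r 2 v = Derive dr v.
Proof.
  intros Hv. apply Derive_ext_loc.
  apply (locally_interval _ v 0 1); simpl; try lra. intros y Hy0 Hy1.
  apply is_derive_unique, is_derive_r. lra.
Qed.

Lemma is_derive_psi v : 0 < v < 1 -> is_derive psi v (dpsi v).
Proof.
  intros Hv. exact (is_derive_minus _ _ v _ _ (is_derive_id v) (is_derive_r v Hv)).
Qed.

Lemma is_derive_dpsi v : 0 < v < 1 -> is_derive dpsi v (- Derive dr v).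
Proof.
  intros Hv. unfold dpsi. auto_derive; [exact (ex_derive_dr v Hv) |].
  rewrite Rmult_1_l. reflexivity.
Qed.

Lemma continuous_psi v : 0 < v < 1 -> continuous psi v.
Proof.
  intros Hv. apply (@ex_derive_continuous R_AbsRing R_NormedModule).
  exists (dpsi v). exact (is_derive_psi v Hv).
Qed.
Lemma maximizer_ratio_in_support c q P : 0 < c -> 0 < q ->
  (forall x, profit F c q x <= profit F c q P) ->
  (forall x, (forall y, profit F c q y <= profit F c q x) -> x = P) ->
  0 < P / q < 1.
Proof.
  intros Hc Hq Hmax Huniq. destruct HF as [HF0 [HF1 _]]. split.
  - apply Rnot_le_lt. intros HP.
    assert (P <= 0) by (replace P with (P / q * q) by (field; lra); nra).
    pose proof (Hmax c) as Hc'. unfold profit in Hc'. rewrite (HF0 _ HP) in Hc'. nra.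
  - apply Rnot_le_lt. intros HP.
    assert (Hzero : forall x, 1 <= x / q -> profit F c q x = 0).
    { intros x Hx. unfold profit. rewrite (HF1 _ Hx). ring. }
    assert (Hshift : P + 1 = P).
    { assert (Hnext : 1 <= (P + 1) / q).
      { unfold Rdiv in *. pose proof (Rinv_0_lt_compat q Hq). nra. }
      apply Huniq. intros y. rewrite (Hzero _ Hnext), <- (Hzero _ HP). apply Hmax. }
    lra.
Qed.

Lemma maximizer_first_order c q P : 0 < q -> 0 < P / q < 1 ->
  (forall x, profit F c q x <= profit F c q P) -> psi (P / q) = c / q.
Proof.
  intros Hq Hv Hmax.
  pose proof (Hfpos _ Hv) as Hfv. pose proof (is_derive_cdf _ Hv) as HFd.
  assert (Hd : is_derive (profit F c q) P
    ((1 - F (P / q)) - (P - c) * f (P / q) / q)).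
  { unfold profit. auto_derive.
    - exists (f (P / q)). exact HFd.
    - replace (Derive (fun x => F x) (P * / q)) with (f (P / q))
        by (symmetry; exact (is_derive_unique F _ _ HFd)).
      change (P * / q) with (P / q). field. lra. }
  pose proof (is_derive_local_max _ (P - 1) (P + 1) P _ Hd ltac:(lra)
    (fun y _ => Hmax y)) as Hfoc.
  unfold psi_of, r_of.
  replace (1 - F (P / q)) with ((P - c) * f (P / q) / q) by lra.
  field. lra.
Qed.

Hypothesis Hpsi : forall v, 0 < v < 1 -> 0 < psi v -> 0 < Derive psi v.

Lemma dpsi_pos v : 0 < v < 1 -> 0 < psi v -> 0 < dpsi v.
Proof.
  intros Hv Hpv. rewrite <- (is_derive_unique _ _ _ (is_derive_psi v Hv)).
  exact (Hpsi v Hv Hpv).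
Qed.

(* If psi a = psi b, the maximum of psi on [a, b] exceeds psi a (psi rises
   right after a), so it is attained inside, where psi > 0 forces psi' > 0. *)
Lemma psi_neq_of_lt a b : 0 < a < 1 -> 0 < b < 1 -> a < b -> 0 < psi a ->
  psi a <> psi b.
Proof.
  intros Ha Hb Hab Hpa Heq.
  assert (Hcont : forall x, a <= x <= b -> continuity_pt psi x).
  { intros x Hx. apply continuity_pt_filterlim, continuous_psi. lra. }
  destruct (continuity_ab_maj psi a b ltac:(lra) Hcont) as [m [Hmax Hm]].
  destruct (is_derive_pos_crossing psi a _ (b - a) (is_derive_psi a Ha)
    (dpsi_pos a Ha Hpa) ltac:(lra)) as [_ [s [_ [Hs [_ Hps]]]]].
  pose proof (Hmax s ltac:(lra)) as Hsm.
  assert (Hm' : a < m < b).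
  { assert (m <> a) by (intros ->; lra). assert (m <> b) by (intros ->; lra). lra. }
  assert (Hm01 : 0 < m < 1) by lra.
  pose proof (is_derive_local_max psi a b m _ (is_derive_psi m Hm01) Hm'
    (fun y Hy => Hmax y ltac:(lra))).
  pose proof (dpsi_pos m Hm01 ltac:(lra)). lra.
Qed.

Lemma psi_injective v1 v2 :
  0 < v1 < 1 -> 0 < v2 < 1 -> 0 < psi v1 -> psi v1 = psi v2 -> v1 = v2.
Proof.
  intros Hv1 Hv2 Hp Heq.
  destruct (Rtotal_order v1 v2) as [H | [H | H]]; [exfalso | exact H | exfalso].
  - exact (psi_neq_of_lt v1 v2 Hv1 Hv2 H Hp Heq).
  - apply (psi_neq_of_lt v2 v1 Hv2 Hv1 H); congruence.
Qed.

(* Arbitrary when y is not a value of psi on (0,1). *)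
Definition psi_inv (y : R) : R :=
  epsilon (inhabits 0) (fun v => 0 < v < 1 /\ psi v = y).

Lemma psi_inv_psi v : 0 < v < 1 -> 0 < psi v -> psi_inv (psi v) = v.
Proof.
  intros Hv Hpv.
  assert (Hspec : 0 < psi_inv (psi v) < 1 /\ psi (psi_inv (psi v)) = psi v).
  { apply (epsilon_spec (inhabits 0) (fun w => 0 < w < 1 /\ psi w = psi v)).
    exists v. auto. }
  destruct Hspec as [Hinv Hpinv].
  symmetry. apply psi_injective; auto.
Qed.

Lemma psi_inv_near v0 eps : 0 < v0 < 1 -> 0 < psi v0 -> 0 < eps ->
  locally (psi v0) (fun y => psi (psi_inv y) = y /\ Rabs (psi_inv y - v0) < eps).
Proof.
  intros Hv0 Hp0 Heps.
  set (e := Rmin eps (Rmin v0 (1 - v0))).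
  assert (He : 0 < e /\ e <= eps /\ e <= v0 /\ e <= 1 - v0).
  { unfold e. repeat split.
    - repeat apply Rmin_glb_lt; lra.
    - apply Rmin_l.
    - eapply Rle_trans; [apply Rmin_r | apply Rmin_l].
    - eapply Rle_trans; [apply Rmin_r | apply Rmin_r]. }
  destruct (is_derive_pos_crossing psi v0 _ e (is_derive_psi v0 Hv0)
    (dpsi_pos v0 Hv0 Hp0) ltac:(lra)) as [a [b [Ha [Hb [Hpa Hpb]]]]].
  assert (Hcont : forall x, a <= x <= b -> continuity_pt psi x).
  { intros x Hx. apply continuity_pt_filterlim, continuous_psi. lra. }
  apply (locally_interval _ (psi v0) (Rmax (psi a) 0) (psi b)); simpl.
  - apply Rmax_lub_lt; lra.
  - exact Hpb.
  - intros y Hy1 Hy2.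
    pose proof (Rmax_l (psi a) 0). pose proof (Rmax_r (psi a) 0).
    destruct (IVT_Rbar_incr psi a b (psi a) (psi b) y) as [x [Hx1 [Hx2 Hx]]];
      simpl; try lra.
    + apply is_lim_continuity, Hcont. lra.
    + apply is_lim_continuity, Hcont. lra.
    + intros x Hx1 Hx2. apply Hcont. lra.
    + simpl in Hx1, Hx2. subst y.
      rewrite psi_inv_psi by lra. split; [reflexivity |].
      apply Rabs_def1; lra.
Qed.

Lemma is_derive_psi_inv v0 : 0 < v0 < 1 -> 0 < psi v0 ->
  is_derive psi_inv (psi v0) (/ dpsi v0).
Proof.
  intros Hv0 Hp0.
  apply (is_derive_inverse psi psi_inv (psi v0) (dpsi v0)).
  - apply filterlim_locally. intros eps.
    generalize (psi_inv_near v0 eps Hv0 Hp0 (cond_pos eps)). apply filter_imp.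
    intros y [_ Hy]. rewrite psi_inv_psi by assumption. exact Hy.
  - generalize (psi_inv_near v0 1 Hv0 Hp0 Rlt_0_1). apply filter_imp. tauto.
  - rewrite psi_inv_psi by assumption. exact (is_derive_psi v0 Hv0).
  - pose proof (dpsi_pos v0 Hv0 Hp0). lra.
Qed.

Variable c : R.
Hypothesis Hc : 0 < c.

Definition pbar (q : R) : R := psi_inv (c / q).
Definition dprice (q : R) : R := pbar q - c / (q * dpsi (pbar q)).
Definition d2price (q : R) : R :=
  c ^ 2 / (q ^ 3 * dpsi (pbar q) ^ 3) * Derive dr (pbar q).

Lemma pbar_eq q v : 0 < q -> 0 < v < 1 -> psi v = c / q -> pbar q = v.
Proof.
  intros Hq Hv Hpv. unfold pbar. rewrite <- Hpv. apply psi_inv_psi; [exact Hv |].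
  rewrite Hpv. apply Rdiv_lt_0_compat; assumption.
Qed.

Lemma maximizer_eq_pbar q P : 0 < q ->
  (forall x, profit F c q x <= profit F c q P) ->
  (forall x, (forall y, profit F c q y <= profit F c q x) -> x = P) ->
  P = q * pbar q /\ 0 < pbar q < 1 /\ psi (pbar q) = c / q.
Proof.
  intros Hq Hmax Huniq.
  pose proof (maximizer_ratio_in_support c q P Hc Hq Hmax Huniq) as Hv.
  pose proof (maximizer_first_order c q P Hq Hv Hmax) as Hpv.
  rewrite (pbar_eq q (P / q) Hq Hv Hpv).
  split; [field; lra | auto].
Qed.

Lemma dpsi_pbar_pos q : 0 < q -> 0 < pbar q < 1 -> psi (pbar q) = c / q ->
  0 < dpsi (pbar q).
Proof.
  intros Hq Hv Hpv. apply dpsi_pos; [exact Hv |].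
  rewrite Hpv. apply Rdiv_lt_0_compat; assumption.
Qed.

Lemma is_derive_pbar q : 0 < q -> 0 < pbar q < 1 -> psi (pbar q) = c / q ->
  is_derive pbar q (- c / (q ^ 2 * dpsi (pbar q))).
Proof.
  intros Hq Hv Hpv.
  pose proof (dpsi_pbar_pos q Hq Hv Hpv).
  assert (Hinv : is_derive psi_inv (c / q) (/ dpsi (pbar q))).
  { rewrite <- Hpv. apply is_derive_psi_inv; [exact Hv |].
    rewrite Hpv. apply Rdiv_lt_0_compat; assumption. }
  unfold pbar at 1. auto_derive.
  - split; [exists (/ dpsi (pbar q)); exact Hinv | lra].
  - replace (Derive (fun x => psi_inv x) (c * / q)) with (/ dpsi (pbar q))
      by (symmetry; exact (is_derive_unique _ _ _ Hinv)).
    field. lra.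
Qed.

Lemma is_derive_price q : 0 < q -> 0 < pbar q < 1 -> psi (pbar q) = c / q ->
  is_derive (fun x => x * pbar x) q (dprice q).
Proof.
  intros Hq Hv Hpv. pose proof (is_derive_pbar q Hq Hv Hpv) as Hd.
  pose proof (dpsi_pbar_pos q Hq Hv Hpv).
  auto_derive; [exists (- c / (q ^ 2 * dpsi (pbar q))); exact Hd |].
  replace (Derive (fun x => pbar x) q) with (- c / (q ^ 2 * dpsi (pbar q)))
    by (symmetry; exact (is_derive_unique _ _ _ Hd)).
  unfold dprice. field. lra.
Qed.

Lemma is_derive_dprice q : 0 < q -> 0 < pbar q < 1 -> psi (pbar q) = c / q ->
  is_derive dprice q (d2price q).
Proof.
  intros Hq Hv Hpv. pose proof (is_derive_pbar q Hq Hv Hpv) as Hd.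
  pose proof (is_derive_dpsi _ Hv) as Hdd.
  pose proof (dpsi_pbar_pos q Hq Hv Hpv).
  unfold dprice. auto_derive.
  - repeat split; try (eexists; eassumption). nra.
  - replace (Derive (fun x => pbar x) q) with (- c / (q ^ 2 * dpsi (pbar q)))
      by (symmetry; exact (is_derive_unique _ _ _ Hd)).
    replace (Derive (fun x => dpsi x) (pbar q)) with (- Derive dr (pbar q))
      by (symmetry; exact (is_derive_unique _ _ _ Hdd)).
    unfold d2price. field. lra.
Qed.

Lemma d2price_same_sign q : 0 < q -> 0 < pbar q < 1 -> psi (pbar q) = c / q ->
  same_sign (d2price q) (Derive_n r 2 (pbar q)).
Proof.
  intros Hq Hv Hpv. pose proof (dpsi_pbar_pos q Hq Hv Hpv).
  rewrite (Derive_n_r_2 _ Hv). apply same_sign_pos_mult.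
  apply Rdiv_lt_0_compat; [nra |]. apply Rmult_lt_0_compat; apply pow_lt; lra.
Qed.

End Distribution.

Theorem lemma9 (ql qh c : R) (F f p : R -> R)
  (Hql : 0 < ql) (Hqlh : ql < qh) (Hc0 : 0 < c) (Hcql : c < ql)
  (HF : is_cdf_with_density F f)
  (Hfpos : forall v, 0 < v < 1 -> 0 < f v)
  (Hf2 : C2_on_01 f)
  (Hpsi : forall v, 0 < v < 1 -> 0 < psi_of F f v -> 0 < Derive (psi_of F f) v)
  (Hp_max : forall q, ql <= q <= qh ->
     forall x, profit F c q x <= profit F c q (p q))
  (Hp_unique : forall q, ql <= q <= qh ->
     forall x, (forall y, profit F c q y <= profit F c q x) -> x = p q) :
  exists p1 p2 : R -> R,
    deriv_on_interval ql qh p p1 /\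
    deriv_on_interval ql qh p1 p2 /\
    forall q, ql <= q <= qh ->
      same_sign (p2 q) (Derive_n (r_of F f) 2 (p q / q)).
Proof.
  assert (Hfoc : forall q, ql <= q <= qh ->
    p q = q * pbar F f c q /\ 0 < pbar F f c q < 1 /\
    psi_of F f (pbar F f c q) = c / q).
  { intros q Hq. apply (maximizer_eq_pbar F f HF Hfpos Hf2 Hpsi c Hc0); [lra | |].
    - exact (Hp_max q Hq).
    - exact (Hp_unique q Hq). }
  exists (dprice F f c), (d2price F f c). split; [| split].
  - apply (deriv_on_interval_of_is_derive _ _ (fun x => x * pbar F f c x)).
    + intros q Hq. destruct (Hfoc q Hq) as [_ [Hv Hpv]].
      apply (is_derive_price F f HF Hfpos Hf2 Hpsi c Hc0); auto; lra.
    + intros q Hq. apply Hfoc, Hq.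
  - apply (deriv_on_interval_of_is_derive _ _ (dprice F f c)); [| reflexivity].
    intros q Hq. destruct (Hfoc q Hq) as [_ [Hv Hpv]].
    apply (is_derive_dprice F f HF Hfpos Hf2 Hpsi c Hc0); auto; lra.
  - intros q Hq. destruct (Hfoc q Hq) as [Hp [Hv Hpv]].
    replace (p q / q) with (pbar F f c q) by (rewrite Hp; field; lra).
    apply (d2price_same_sign F f HF Hfpos Hf2 Hpsi c Hc0); auto; lra.
Qed.
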